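(* Let $G$ be a locally compact group with a compact open subgroup $H$, and let $f:G\to\mathbb C$. Then $f\in\mathcal P(G)$ if and only if there are finitely many functions $f_i,g_i,f'_j,g'_j\in C_0(G)$ such that for all $x,y\in G$: (i) $f(xy)\chi_H(y)=\sum_{i=1}^m f_i(x)g_i(y)$, and (ii) $f(y)\chi_H(xy)=\sum_{j=1}^n f'_j(x)g'_j(y)$.
   Context: $\chi_H$ is the characteristic function of $H$; $C_0(G)$ denotes continuous complex functions vanishing at infinity. $\mathcal P(G)$ is the set of $f\in C_c(G)$ such that for some compact open subgroup $K$ of $G$ there exist finitely many $f_i\in C_c(G)$ and $\phi_i\in C(K)$ with $f(xk)=\sum_i f_i(x)\phi_i(k)$ for all $x\in G,k\in K$. *)

From HB Require Import structures.
From mathcomp Require Import all_boot all_order all_algebra.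
From mathcomp Require Import complex.
From mathcomp Require Import all_classical all_reals all_analysis.
Import numFieldNormedType.Exports.
Set Implicit Arguments. Unset Strict Implicit. Unset Printing Implicit Defensive.
Import Order.TTheory GRing.Theory Num.Theory.
Local Open Scope classical_set_scope.
Local Open Scope ring_scope.

Definition CC (R : realType) : numClosedFieldType := R[i].

Definition is_lc_group (T : topologicalType) (mul : T -> T -> T) (inv : T -> T)
    (e : T) : Prop :=
  [/\ (forall x y z, mul x (mul y z) = mul (mul x y) z),
      (forall x, mul e x = x /\ mul x e = x),
      (forall x, mul (inv x) x = e /\ mul x (inv x) = e),
      continuous (fun p : T * T => mul p.1 p.2) /\ continuous inv &
      hausdorff_space T /\ locally_compact [set: T]].

Definition compact_open_subgroup (T : topologicalType) (mul : T -> T -> T)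
    (inv : T -> T) (e : T) (H : set T) : Prop :=
  [/\ H e, (forall x y, H x -> H y -> H (mul x y)), (forall x, H x -> H (inv x)),
      compact H & open H].

Definition Cc (R : realType) (T : topologicalType) (f : T -> CC R) : Prop :=
  continuous f /\ compact (closure [set x | f x != 0]).

Definition C0 (R : realType) (T : topologicalType) (f : T -> CC R) : Prop :=
  continuous f /\
  forall eps : R, 0 < eps ->
    exists K : set T, compact K /\ forall x, ~ K x -> `|f x| < (eps%:C)%C.

Definition in_P (R : realType) (T : topologicalType) (mul : T -> T -> T)
    (inv : T -> T) (e : T) (f : T -> CC R) : Prop :=
  Cc f /\
  exists K : set T, compact_open_subgroup mul inv e K /\
  exists (n : nat) (fi : 'I_n -> T -> CC R) (phi : 'I_n -> T -> CC R),
    (forall i, Cc (fi i)) /\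
    (forall i, {within K, continuous (phi i)}) /\
    (forall x k, K k -> f (mul x k) = \sum_(i < n) fi i x * phi i k).

From HB Require Import structures.
From mathcomp Require Import all_boot all_order all_algebra.
From mathcomp Require Import complex.
From mathcomp Require Import all_classical all_reals all_analysis.
From mathcomp Require Import finmap.
Import numFieldNormedType.Exports.
Import Order.TTheory GRing.Theory Num.Theory.
Local Open Scope classical_set_scope.
Local Open Scope ring_scope.

(* If f(xk) = Σ f_i(x) φ_i(k) for k in a compact open subgroup K, cover the
   compact H by finitely many cosets h(K ∩ H), and the compact support of f by
   finitely many cosets hH; on each such coset, f(xy) χ_H(y) and f(y) χ_H(xy)
   are products of translates of f_i, φ_i, f and χ_H.
   Conversely, (ii) confines the support of f to at most n cosets of H: given
   y_1, ..., y_k in distinct cosets with k > n, some w ≠ 0 has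
   Σ_t w_t g'_j(y_t) = 0 for all j, whence
   w_s f(y_s) = Σ_t w_t f(y_t) χ_H(y_s^-1 y_t) = 0 for all s.  The union C of
   these cosets is compact and open, f is continuous by (i) at y = e, and (i)
   for y in H gives f(xk) = Σ χ_C(x) f_i(x) g_i(k). *)

(* [compact_cover] is only stated for pointed spaces; any point will do. *)
Definition pointed_at {T : topologicalType} (x0 : T) : Type := T.
HB.instance Definition _ (T : topologicalType) (x0 : T) :=
  Topological.copy (pointed_at x0) T.
HB.instance Definition _ (T : topologicalType) (x0 : T) :=
  isPointed.Build (pointed_at x0) x0.

Lemma compact_pointwise_subcover {T : topologicalType} (x0 : T) {A : set T}
    {U : T -> set T} :
  compact A -> (forall y, open (U y)) -> (forall y, A y -> U y y) ->
  exists2 D : seq T, (forall y, y \in D -> A y) &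
    A `<=` \bigcup_(y in [set` D]) U y.
Proof.
move=> cA oU Uy; have /(_ T A U) [] : @cover_compact (pointed_at x0) A.
- by rewrite -compact_cover.
- by move=> y _; exact: oU.
- by move=> y Ay; exists y => //; exact: Uy.
move=> D DA AD; exists D => [y /DA|y /AD [z Dz Uz]]; first by move/set_mem.
by exists z.
Qed.

Definition C0_tensor (R : realType) {T : topologicalType} (F : T -> T -> CC R) :=
  exists m (u v : 'I_m -> T -> CC R), (forall i, C0 (u i) /\ C0 (v i)) /\
    forall x y, F x y = \sum_(i < m) u i x * v i y.

Section CompactSupport.
Context {R : realType} {T : topologicalType}.

Lemma compact_closure_support (g : T -> CC R) (C : set T) :
  closed C -> compact C -> [set x | g x != 0] `<=` C ->
  compact (closure [set x | g x != 0]).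
Proof.
move=> clC cC gC; apply: subclosed_compact cC _; first exact: closed_closure.
by rewrite [X in _ `<=` X](closure_id C).1 //; exact: closureS.
Qed.

Lemma Cc_C0 (g : T -> CC R) : Cc g -> C0 g.
Proof.
case=> gc cg; split=> // eps eps0; exists (closure [set x | g x != 0]).
split=> // x nx; suff -> : g x = 0 by rewrite normr0 ltcR.
by apply/eqP/negPn/negP => gx; apply: nx; exact: subset_closure.
Qed.

Lemma continuous_indicator_mul (A : set T) (g : T -> CC R) :
  clopen A -> {in A, continuous g} -> continuous (fun x => \1_A x * g x).
Proof.
move=> [oA clA] gc x; rewrite /continuous_at; have [Ax|nAx] := pselect (A x).
  rewrite indicE mem_set // mul1r; apply: cvg_trans (gc x (mem_set Ax)).
  apply: near_eq_cvg; apply: filterS (open_nbhs_nbhs (conj oA Ax)) => y Ay.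
  by rewrite indicE mem_set // mul1r.
have oCA : open (~` A) by rewrite -closedC setCK.
rewrite indicE memNset // mul0r.
apply: cvg_trans (near_eq_cvg _) (@cvg_cst _ _ _ (nbhs x) _).
apply: filterS (open_nbhs_nbhs (conj oCA nAx)) => y nAy.
by rewrite indicE memNset // mul0r.
Qed.

Lemma Cc_indicator_mul (A : set T) (g : T -> CC R) :
  clopen A -> compact A -> {in A, continuous g} ->
  Cc (fun x => \1_A x * g x).
Proof.
move=> cloA cA gc; split; first exact: continuous_indicator_mul.
apply: compact_closure_support cloA.2 cA _ => x /=.
by rewrite indicE; case: (boolP (x \in A)) => [/set_mem|]; rewrite ?mul0r ?eqxx.
Qed.

Lemma C0_indicator (A : set T) : clopen A -> compact A -> C0 (\1_A : T -> CC R).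
Proof.
move=> cloA cA; suff -> : \1_A = fun x => \1_A x * (1 : CC R).
  by apply/Cc_C0/Cc_indicator_mul => // x _; exact: cvg_cst.
by apply/funext => x; rewrite mulr1.
Qed.

Lemma C0_tensor_finType (I : finType) (u v : I -> T -> CC R) F :
  (forall a, C0 (u a) /\ C0 (v a)) ->
  (forall x y, F x y = \sum_a u a x * v a y) -> C0_tensor R F.
Proof.
move=> C0uv Fe; exists #|I|, (u \o enum_val), (v \o enum_val); split=> [i|x y].
  exact: C0uv.
rewrite Fe -(big_enum_val (fun a => u a x * v a y)).
by apply: eq_bigl => a; rewrite inE.
Qed.

End CompactSupport.

Definition semitopological_group {T : topologicalType} (mul : T -> T -> T)
    (inv : T -> T) (e : T) :=
  [/\ (forall x y z, mul x (mul y z) = mul (mul x y) z),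
      (forall x, mul e x = x /\ mul x e = x),
      (forall x, mul (inv x) x = e /\ mul x (inv x) = e),
      (forall a, continuous (mul a)) & (forall a, continuous (mul^~ a))].

Lemma lc_group_semitopological (T : topologicalType) (mul : T -> T -> T)
    (inv : T -> T) (e : T) :
  is_lc_group mul inv e -> semitopological_group mul inv e.
Proof.
case=> mulA mul1 mulV [mulC _] _; split=> // a x.
- apply: (continuous_comp (f := fun y => (a, y))) (mulC _).
  by apply: cvg_pair; [exact: cvg_cst|exact: cvg_id].
- apply: (continuous_comp (f := fun y => (y, a))) (mulC _).
  by apply: cvg_pair; [exact: cvg_id|exact: cvg_cst].
Qed.

Section SemitopologicalGroup.
Context {R : realType} {T : topologicalType}.
Context {mul : T -> T -> T} {inv : T -> T} {e : T}.
Hypothesis G : semitopological_group mul inv e.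

Let mulA x y z : mul x (mul y z) = mul (mul x y) z. Proof. by case: G. Qed.
Let mul1g x : mul e x = x. Proof. by case: G => _ /(_ x) []. Qed.
Let mulg1 x : mul x e = x. Proof. by case: G => _ /(_ x) []. Qed.
Let mulVg x : mul (inv x) x = e. Proof. by case: G => _ _ /(_ x) []. Qed.
Let mulgV x : mul x (inv x) = e. Proof. by case: G => _ _ /(_ x) []. Qed.
Let mulKg a b : mul (inv a) (mul a b) = b. Proof. by rewrite mulA mulVg mul1g. Qed.
Let mulKVg a b : mul a (mul (inv a) b) = b. Proof. by rewrite mulA mulgV mul1g. Qed.
Let mulgK a b : mul (mul b a) (inv a) = b. Proof. by rewrite -mulA mulgV mulg1. Qed.
Let invK a : inv (inv a) = a. Proof. by rewrite -[LHS]mulg1 -(mulVg a) mulKg. Qed.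
Let invM a b : inv (mul a b) = mul (inv b) (inv a).
Proof.
by rewrite -[RHS](mulKg (mul a b)) -[mul (mul a b) _]mulA mulKVg mulgV mulg1.
Qed.
Let continuous_mull a : continuous (mul a). Proof. by case: G. Qed.
Let continuous_mulr a : continuous (mul^~ a). Proof. by case: G. Qed.

Lemma C0_mulr (g : T -> CC R) h : C0 g -> C0 (fun x => g (mul x h)).
Proof.
case=> gc g0; split=> [x|eps /g0 [K [cK gK]]].
  exact: continuous_comp (continuous_mulr h x) (gc _).
exists (mul^~ (inv h) @` K); split.
  exact: continuous_compact (continuous_subspaceT (continuous_mulr _)) cK.
by move=> x nx; apply: gK => Kxh; apply: nx; exists (mul x h); rewrite ?mulgK.
Qed.

Definition open_subgroup (S : set T) :=
  [/\ S e, (forall x y, S x -> S y -> S (mul x y)), (forall x, S x -> S (inv x))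
    & open S].

Definition coset (S : set T) (a : T) : set T := [set x | S (mul (inv a) x)].

Definition coset_union (S : set T) (hs : seq T) : set T :=
  \bigcup_(h in [set` hs]) coset S h.

Definition distinct_cosets (S : set T) (hs : seq T) :=
  uniq hs /\ {in hs &, forall a b, coset S a b -> a = b}.

Lemma open_subgroupI (S S' : set T) :
  open_subgroup S -> open_subgroup S' -> open_subgroup (S `&` S').
Proof.
case=> S1 SM SV oS [S'1 S'M S'V oS']; split; [by []| | |exact: openI].
- by move=> x y [Sx S'x] [Sy S'y]; split; [exact: SM|exact: S'M].
- by move=> x [Sx S'x]; split; [exact: SV|exact: S'V].
Qed.

Section OpenSubgroup.
Context {S : set T}.
Hypothesis sS : open_subgroup S.

Let S1 : S e. Proof. by case: sS. Qed.
Let SM x y : S x -> S y -> S (mul x y). Proof. by case: sS => _ + _ _; apply. Qed.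
Let SV x : S x -> S (inv x). Proof. by case: sS => _ _ + _; apply. Qed.

Lemma subgroup_mulr k x : S k -> S (mul x k) = S x.
Proof.
move=> Sk; rewrite propeqE; split=> [Sxk|Sx]; last exact: SM.
by rewrite -(mulgK k x); apply: SM => //; exact: SV.
Qed.

Lemma indicator_mulr k x : S k -> \1_S (mul x k) = \1_S x :> CC R.
Proof.
move=> Sk; rewrite !indicE; have [Sx|nSx] := pselect (S x).
  by rewrite (mem_set Sx) mem_set // subgroup_mulr.
by rewrite (memNset nSx) memNset // subgroup_mulr.
Qed.

Lemma coset_refl a : coset S a a.
Proof. by rewrite /coset /= mulVg. Qed.

Lemma coset_sym {a b} : coset S a b -> coset S b a.
Proof. by move=> /SV; rewrite /coset /= invM invK. Qed.

Lemma coset_trans {a b c} : coset S a b -> coset S b c -> coset S a c.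
Proof. by rewrite /coset /= => ab /(SM _ _ ab); rewrite -mulA mulKVg. Qed.

Lemma coset_open a : open (coset S a).
Proof.
by case: sS => _ _ _ oS; move/continuousP: (continuous_mull (inv a)); apply.
Qed.

Lemma open_subgroup_closed : closed S.
Proof.
rewrite -[S]setCK closedC openE => x /= nSx.
apply: filterS (open_nbhs_nbhs (conj (coset_open x) (coset_refl x))) => y xy Sy.
by apply: nSx; rewrite -(mulKVg y x); apply: SM => //; exact: coset_sym.
Qed.

Lemma coset_clopen a : clopen (coset S a).
Proof.
split; first exact: coset_open.
exact: preimage_closed (fun x _ => continuous_mull _ x) open_subgroup_closed.
Qed.

Lemma coset_compact a : compact S -> compact (coset S a).
Proof.
move=> cS; have -> : coset S a = mul a @` S.
  apply/seteqP; split=> [x ax|_ [y Sy <-]]; last by rewrite /coset /= mulKg.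
  by exists (mul (inv a) x); rewrite ?mulKVg.
exact: continuous_compact (continuous_subspaceT (continuous_mull a)) cS.
Qed.

Lemma coset_union_clopen hs : clopen (coset_union S hs).
Proof.
split; first by apply: bigcup_open => h _; exact: coset_open.
rewrite /coset_union bigcup_seq; apply: closed_bigsetU => h _.
by case: (coset_clopen h).
Qed.

Lemma coset_union_compact hs : compact S -> compact (coset_union S hs).
Proof.
move=> cS; rewrite /coset_union bigcup_seq.
by apply: bigsetU_compact => h _; exact: coset_compact.
Qed.

Lemma distinct_cosets_cons y hs :
  distinct_cosets S hs -> ~ coset_union S hs y -> distinct_cosets S (y :: hs).
Proof.
move=> [uhs dhs] nhy; split.
  rewrite /= uhs andbT; apply/negP => yhs.
  by apply: nhy; exists y => //; exact: coset_refl.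
move=> a b; rewrite !inE => /predU1P [->|ahs] /predU1P [->|bhs] // ab.
- by case: nhy; exists b => //; exact: coset_sym.
- by case: nhy; exists a.
- exact: dhs.
Qed.

Lemma distinct_cosets_nth {hs : seq T} {s t : 'I_(size hs)} :
  distinct_cosets S hs -> coset S (nth e hs s) (nth e hs t) -> s = t.
Proof.
move=> [uhs dhs] st; apply/val_inj/eqP.
rewrite -(nth_uniq e (ltn_ord s) (ltn_ord t) uhs).
by apply/eqP; apply: dhs => //; exact: (mem_nth e (ltn_ord _)).
Qed.

Lemma distinct_cosets_refine D : exists2 hs, distinct_cosets S hs &
  {subset hs <= D} /\ coset_union S D `<=` coset_union S hs.
Proof.
elim: D => [|a D [hs dhs [hsD Dhs]]]; first by exists [::] => //; split=> // x [].
have [[h hhs ha]|nha] := pselect (coset_union S hs a).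
  exists hs => //; split=> [h' /hsD|x [b]]; first by rewrite inE orbC => ->.
  rewrite /= in_cons => /predU1P [->|bD] bx; last by apply: Dhs; exists b.
  by exists h => //; exact: coset_trans ha bx.
exists (a :: hs); first exact: distinct_cosets_cons.
split=> [h'|x [b]]; rewrite /= !in_cons => /predU1P [->|]; rewrite ?eqxx //.
- by move=> /hsD ->; rewrite orbT.
- by exists a; rewrite /= ?in_cons ?eqxx.
- move=> bD bx; have [h hhs hx] : coset_union S hs x by apply: Dhs; exists b.
  by exists h; rewrite /= ?in_cons ?hhs ?orbT.
Qed.

Lemma compact_coset_cover {A} : compact A -> exists2 hs, distinct_cosets S hs &
  (forall h, h \in hs -> A h) /\ A `<=` coset_union S hs.
Proof.
move=> cA; have [D DA AD] :=
  compact_pointwise_subcover e cA coset_open (fun y _ => coset_refl y).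
have [hs dhs [hsD Dhs]] := distinct_cosets_refine D.
by exists hs => //; split=> [h /hsD /DA|x /AD /Dhs].
Qed.

Lemma sum_coset_indicator {hs} {F : T -> CC R} {h y} :
  distinct_cosets S hs -> h \in hs -> coset S h y ->
  \sum_(h' <- hs) \1_(coset S h') y * F h' = F h.
Proof.
move=> [uhs dhs] hhs hy; rewrite (bigD1_seq h) //= indicE mem_set // mul1r.
rewrite big_seq_cond big1 ?addr0 // => h' /andP [h'hs h'h].
rewrite indicE memNset ?mul0r // => h'y; move/eqP: h'h; apply.
by apply: dhs => //; exact: coset_trans h'y (coset_sym hy).
Qed.

Lemma sum_coset_indicator0 hs (F : T -> CC R) y : ~ coset_union S hs y ->
  \sum_(h <- hs) \1_(coset S h) y * F h = 0.
Proof.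
move=> nhy; rewrite big_seq big1 // => h hhs.
by rewrite indicE memNset ?mul0r // => hy; apply: nhy; exists h.
Qed.

End OpenSubgroup.

Lemma distinct_cosets_size_le {H f n} {u v : 'I_n -> T -> CC R} {hs} :
  open_subgroup H ->
  (forall x y, f y * \1_H (mul x y) = \sum_(j < n) u j x * v j y) ->
  distinct_cosets H hs -> (forall h, h \in hs -> f h != 0) -> (size hs <= n)%N.
Proof.
move=> sH fuv dhs fhs; rewrite leqNgt; apply/negP => n_lt_size.
pose y (t : 'I_(size hs)) := nth e hs t.
pose A := \matrix_(t < size hs, j < n) v j (y t).
have : kermx A != 0.
  by rewrite kermx_eq0 /row_free neq_ltn (leq_ltn_trans (rank_leq_col A) n_lt_size).
case/rowV0Pn => w /sub_kermxP wA; apply/negP; rewrite negbK; apply/eqP/rowP => s.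
have : \sum_(t < size hs) w 0 t * (f (y t) * \1_H (mul (inv (y s)) (y t))) = 0.
  under eq_bigr do rewrite fuv mulr_sumr.
  rewrite exchange_big /= big1 // => j _.
  have /matrixP/(_ 0 j) := wA; rewrite !mxE => wAj.
  transitivity (u j (inv (y s)) * \sum_t w 0 t * A t j); last by rewrite wAj mulr0.
  by rewrite mulr_sumr; apply: eq_bigr => t _; rewrite mxE mulrCA.
have H1 : H e by case: sH.
rewrite (bigD1 s) //= mulVg indicE mem_set // mulr1 big1 ?addr0 => [/eqP|t ts].
  by rewrite mxE mulf_eq0 (negPf (fhs _ (mem_nth e (ltn_ord s)))) orbF => /eqP.
rewrite indicE memNset ?mulr0 // => st; move/eqP: ts; apply.
by rewrite (distinct_cosets_nth dhs st).
Qed.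

Lemma support_finite_cosets {H f n} {u v : 'I_n -> T -> CC R} :
  open_subgroup H ->
  (forall x y, f y * \1_H (mul x y) = \sum_(j < n) u j x * v j y) ->
  exists hs, [set y | f y != 0] `<=` coset_union H hs.
Proof.
move=> sH fuv; apply: contrapT => nocover.
have grow k : exists hs,
    [/\ size hs = k, distinct_cosets H hs & forall h, h \in hs -> f h != 0].
  elim: k => [|k [hs [<- dhs fhs]]]; first by exists [::].
  have /existsNP [y /not_implyP [fy nhy]] :
      ~ (forall y, f y != 0 -> coset_union H hs y).
    by move=> cover; apply: nocover; exists hs.
  exists (y :: hs); split=> //; first exact: distinct_cosets_cons.
  by move=> h; rewrite in_cons => /predU1P [->|/fhs].
have [hs [size_hs dhs fhs]] := grow n.+1.
by have := distinct_cosets_size_le sH fuv dhs fhs; rewrite size_hs ltnn.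
Qed.

Lemma in_P_C0_tensor_left {H f} :
  compact_open_subgroup mul inv e H -> in_P mul inv e f ->
  C0_tensor R (fun x y => f (mul x y) * \1_H y).
Proof.
move=> [H1 HM HV cH oH] [_ [K [[K1 KM KV _ oK] [m [fi [phi [fiCc [phiK fE]]]]]]]].
have sH : open_subgroup H by [].
have sL : open_subgroup (K `&` H) by apply: open_subgroupI.
have cL : compact (K `&` H).
  exact: subclosed_compact (open_subgroup_closed sL) cH (@subIsetr _ _ _).
have [hs dhs [hsH Hhs]] := compact_coset_cover sL cH.
pose h (s : 'I_(size hs)) := nth e hs s.
apply: (@C0_tensor_finType _ _ ('I_(size hs) * 'I_m)%type
  (fun p x => fi p.2 (mul x (h p.1)))
  (fun p y => \1_(coset (K `&` H) (h p.1)) y * phi p.2 (mul (inv (h p.1)) y))).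
  move=> [s i]; split; first exact/C0_mulr/Cc_C0.
  apply/Cc_C0/Cc_indicator_mul; [exact: coset_clopen|exact: coset_compact|].
  move=> y /set_mem [Ky _]; apply: continuous_comp (continuous_mull _ y) _.
  by move: (phiK i); rewrite continuous_open_subspace // => /(_ _ (mem_set Ky)).
move=> x y; transitivity (\sum_(h' <- hs) \1_(coset (K `&` H) h') y *
    \sum_(i < m) fi i (mul x h') * phi i (mul (inv h') y)); last first.
  rewrite (big_nth e) big_mkord; under eq_bigr do rewrite mulr_sumr.
  by rewrite pair_bigA; apply: eq_bigr => -[s i] _; rewrite mulrCA.
have [Hy|nHy] := pselect (H y).
  have [h' h'hs h'y] := Hhs y Hy.
  rewrite (sum_coset_indicator sL dhs h'hs h'y) indicE mem_set // mulr1.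
  by rewrite -fE; [rewrite -mulA mulKVg | case: h'y].
rewrite indicE memNset // mulr0 sum_coset_indicator0 // => -[h' h'hs [_ Hh'y]].
by apply: nHy; rewrite -(mulKVg h' y); apply: HM => //; exact: hsH.
Qed.

Lemma Cc_C0_tensor_right {H f} :
  compact_open_subgroup mul inv e H -> Cc f ->
  C0_tensor R (fun x y => f y * \1_H (mul x y)).
Proof.
move=> [H1 HM HV cH oH] [fc cf]; have sH : open_subgroup H by [].
have [hs dhs [_ supp_hs]] := compact_coset_cover sH cf.
pose h (s : 'I_(size hs)) := nth e hs s.
apply: (@C0_tensor_finType _ _ 'I_(size hs) (fun s x => \1_H (mul x (h s)))
  (fun s y => \1_(coset H (h s)) y * f y)).
  move=> s; split.
    by apply/C0_mulr/C0_indicator => //; split=> //; exact: open_subgroup_closed.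
  apply/Cc_C0/Cc_indicator_mul; [exact: coset_clopen|exact: coset_compact|].
  by move=> y _; exact: fc.
move=> x y.
transitivity (\sum_(h' <- hs) \1_(coset H h') y * (\1_H (mul x h') * f y)).
  have [fy0|fy] := eqVneq (f y) 0.
    by rewrite fy0 mul0r big1 // => h' _; rewrite !mulr0.
  have [h' h'hs h'y] := supp_hs y (@subset_closure _ [set x | f x != 0] y fy).
  rewrite (sum_coset_indicator sH dhs h'hs h'y) mulrC.
  by rewrite -(mulKVg h' y) mulA indicator_mulr.
by rewrite (big_nth e) big_mkord; apply: eq_bigr => s _; rewrite mulrCA.
Qed.

Lemma in_P_of_C0_tensors {H f} :
  compact_open_subgroup mul inv e H ->
  C0_tensor R (fun x y => f (mul x y) * \1_H y) ->
  C0_tensor R (fun x y => f y * \1_H (mul x y)) -> in_P mul inv e f.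
Proof.
move=> hH [m [u [v [C0uv fuv]]]] [n [u' [v' [_ fuv']]]].
have [H1 HM HV cH oH] := hH; have sH : open_subgroup H by [].
have [hs supp_hs] := support_finite_cosets sH fuv'.
have [cloC cC] := (coset_union_clopen sH hs, coset_union_compact hs cH).
have uc i : continuous (u i) by case: (C0uv i) => [[]].
have fE x k : H k -> f (mul x k) = \sum_(i < m) u i x * v i k.
  by move=> Hk; rewrite -fuv indicE mem_set // mulr1.
have fc : continuous f.
  have -> : f = fun x => \sum_(i < m) u i x * v i e.
    by apply/funext => x; rewrite -fE // mulg1.
  apply: continuous_big => [|i _ x]; first exact: add_continuous.
  by apply: continuousM; [exact: uc|exact: cvg_cst].
split; first by split=> //; exact: compact_closure_support cloC.2 cC supp_hs.
exists H; split=> //; exists m, (fun i x => \1_(coset_union H hs) x * u i x), v.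
split; [|split].
- by move=> i; apply: Cc_indicator_mul => // x _; exact: uc.
- by move=> i; apply: continuous_subspaceT; case: (C0uv i) => _ [].
move=> x k Hk; rewrite fE //; have [Cx|nCx] := pselect (coset_union H hs x).
  by apply: eq_bigr => i _; rewrite indicE mem_set // mul1r.
rewrite [RHS]big1 => [|i _]; last by rewrite indicE memNset // !mul0r.
rewrite -fE //; apply/eqP/negPn/negP => /supp_hs [h hhs].
by rewrite /coset /= mulA subgroup_mulr // => hx; apply: nCx; exists h.
Qed.

End SemitopologicalGroup.

Theorem proposition3p9 (R : realType) (T : topologicalType)
    (mul : T -> T -> T) (inv : T -> T) (e : T) (H : set T) (f : T -> CC R) :
  is_lc_group mul inv e ->
  compact_open_subgroup mul inv e H ->
  in_P mul inv e f <->
  exists (m n : nat) (fi gi : 'I_m -> T -> CC R) (fj' gj' : 'I_n -> T -> CC R),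
    [/\ (forall i, C0 (fi i) /\ C0 (gi i)),
        (forall j, C0 (fj' j) /\ C0 (gj' j)),
        (forall x y, f (mul x y) * \1_H y = \sum_(i < m) fi i x * gi i y) &
        (forall x y, f y * \1_H (mul x y) = \sum_(j < n) fj' j x * gj' j y)].
Proof.
move=> /lc_group_semitopological G hH; split=> [fP|].
  have [m [fi [gi [C0i fEi]]]] := in_P_C0_tensor_left G hH fP.
  have [n [fj [gj [C0j fEj]]]] := Cc_C0_tensor_right G hH fP.1.
  by exists m, n, fi, gi, fj, gj.
move=> [m [n [fi [gi [fj [gj [C0i C0j fEi fEj]]]]]]].
by apply: (in_P_of_C0_tensors G hH); [exists m, fi, gi | exists n, fj, gj].
Qed.
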